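(* Let $G$ be a graph and $v$ a vertex of $G$. Then $$\phi(G)\le \phi(G-v)+\phi(G-N[v])+\sum_{u\in N(v)}\phi\big(G-(N[v]\cup N[u])\big).$$ Moreover, if there exists a vertex $w\in N(v)$ with $N[w]\subseteq N[v]$, then $$\phi(G)\le \phi(G-v)+\sum_{u\in N(v)}\phi\big(G-(N[v]\cup N[u])\big).$$
   Context: Graphs are finite and simple. $N(v)$ is the neighborhood of $v$, $N[v]=N(v)\cup\{v\}$, and $G-S$ is the subgraph induced by $V(G)\setminus S$. A subset $F$ of vertices is a dissociation set if $G[F]$ has maximum degree at most $1$; a maximal dissociation set is one not properly contained in another dissociation set; $\phi(G)$ is the number of maximal dissociation sets of $G$, with $\phi=1$ for the graph with no vertices. *)

From mathcomp Require Import all_boot.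
Set Implicit Arguments. Unset Strict Implicit. Unset Printing Implicit Defensive.

(* A finite simple graph: vertex type T : finType, adjacency e : rel T,
   assumed symmetric and irreflexive (hypotheses of the theorem). *)

Section Graph.
Variables (T : finType) (e : rel T).

Definition nbh (v : T) : {set T} := [set u | e v u].
Definition cnbh (v : T) : {set T} := v |: nbh v.

Definition dissoc (F : {set T}) : bool :=
  [forall x in F, #|F :&: nbh x| <= 1].

(* phi of the induced subgraph G[S]: number of maximal dissociation sets of G[S]
   (dissociation sets of G[S] are exactly dissociation sets of G contained in S).
   For S = set0 this equals 1 (the empty set is the unique maximal one). *)
Definition phi (S : {set T}) : nat :=
  #|[set F : {set T} | maxset (fun F : {set T} => (F \subset S) && dissoc F) F]|.

End Graph.

From mathcomp Require Import all_boot.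
Set Implicit Arguments. Unset Strict Implicit. Unset Printing Implicit Defensive.

(* Sort the maximal dissociation sets F of G by how they meet N[v]:
   (a) v is not in F;  (b) v is in F and isolated in G[F];
   (c) v and some neighbour u of v are both in F.
   Removing from F the vertices X of N[v] it contains (X = {}, {v}, {v,u})
   gives a maximal dissociation set of G - S, where S = {v}, N[v],
   N[v] u N[u] respectively (lemma [maxdiss_remove]); since F = X u (F\X)
   this map is injective, so each class is counted by the corresponding phi,
   and the union bound gives the first inequality.
   If some w in N(v) has N[w] included in N[v], class (b) is empty: w could
   be added to such an F, contradicting maximality; this gives the second. *)

Lemma card_bigcup_le (T I : finType) (A : {pred I}) (f : I -> {set T}) :
  #|\bigcup_(i in A) f i| <= \sum_(i in A) #|f i|.
Proof.
apply: (big_ind2 (fun (X : {set T}) n => #|X| <= n)) => // [|X1 n1 X2 n2 h1 h2].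
  by rewrite cards0.
by apply: leq_trans (leq_card_setU _ _) _; apply: leq_add.
Qed.

Section MaximalDissociationSets.
Variables (T : finType) (e : rel T).
Hypotheses (e_sym : symmetric e) (e_irr : irreflexive e).

Definition dissoc_in (S F : {set T}) : bool := (F \subset S) && dissoc e F.
Definition maxdiss (S F : {set T}) : bool := maxset (dissoc_in S) F.

Lemma phiE (S : {set T}) : phi e S = #|[set F | maxdiss S F]|.
Proof. by []. Qed.

Lemma dissoc_sub (F G : {set T}) : dissoc e F -> G \subset F -> dissoc e G.
Proof.
move=> /forall_inP dF sGF; apply/forall_inP => x xG.
by apply: leq_trans (dF x (subsetP sGF x xG)); apply/subset_leq_card/setSI.
Qed.

Lemma dissoc_nbh_uniq (F : {set T}) z x y :
  dissoc e F -> z \in F -> x \in F -> y \in F -> e z x -> e z y -> x = y.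
Proof.
move=> /forall_inP dF zF xF yF zx zy.
by apply: (card_le1_eqP (dF z zF)); rewrite !inE ?xF ?yF.
Qed.

Lemma no_nbh_in (F : {set T}) x y :
  F :&: nbh e x = set0 -> y \in F -> e x y = false.
Proof.
move=> Fx yF; apply/negP => xy.
have : y \in F :&: nbh e x by rewrite !inE yF.
by rewrite Fx inE.
Qed.

Lemma dissoc_add (F : {set T}) x :
  dissoc e F -> #|F :&: nbh e x| <= 1 ->
  (forall y, y \in F -> e x y -> F :&: nbh e y = set0) -> dissoc e (x |: F).
Proof.
move=> /forall_inP dF hx hy; apply/forall_inP => y /setU1P [->|yF].
  apply: leq_trans hx; apply/subset_leq_card/subsetP => z.
  rewrite !inE => /andP [/predU1P [->|zF] xz]; first by rewrite e_irr in xz.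
  by rewrite zF.
case exy: (e x y).
  rewrite -(cards1 x); apply/subset_leq_card/subsetP => z.
  rewrite !inE => /andP [/predU1P [->|zF] yz] //.
  have : z \in F :&: nbh e y by rewrite !inE zF.
  by rewrite hy // inE.
apply: leq_trans (dF y yF); apply/subset_leq_card/subsetP => z.
rewrite !inE => /andP [/predU1P [->|zF] yz]; last by rewrite zF.
by rewrite e_sym exy in yz.
Qed.

Lemma dissoc_add_isolated (F : {set T}) x :
  dissoc e F -> F :&: nbh e x = set0 -> dissoc e (x |: F).
Proof.
move=> dF Fx; apply: dissoc_add; rewrite ?Fx ?cards0 // => y yF.
by rewrite (no_nbh_in Fx yF).
Qed.

Lemma dissoc_add_edge (F : {set T}) v u :
  dissoc e F -> e v u -> F :&: nbh e v = set0 -> F :&: nbh e u = set0 ->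
  dissoc e ([set v; u] :|: F).
Proof.
move=> dF vu Fv Fu; rewrite -setUA.
have uFv : (u |: F) :&: nbh e v = [set u].
  by rewrite setIUl Fv setU0; apply/setIidPl; rewrite sub1set inE.
apply: dissoc_add; first exact: dissoc_add_isolated.
  by rewrite uFv cards1.
move=> y yuF vy; have : y \in (u |: F) :&: nbh e v by rewrite inE yuF inE.
rewrite uFv inE => /eqP ->.
by rewrite setIUl Fu setU0; apply/setP => z; rewrite !inE; case: eqP => // ->; rewrite e_irr.
Qed.

Lemma nbh_outside_cnbh (B : {set T}) x :
  B \subset ~: cnbh e x -> B :&: nbh e x = set0.
Proof.
move=> sB; apply/setP => y; rewrite !inE; apply/negP => /andP [yB xy].
by move: (subsetP sB y yB); rewrite !inE xy orbT.
Qed.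

Lemma maxdiss_remove (S X F : {set T}) :
  maxdiss setT F -> X \subset F -> [disjoint X & S] -> F :\: X \subset S ->
  (forall B : {set T}, B \subset S -> dissoc e B -> dissoc e (X :|: B)) ->
  maxdiss S (F :\: X).
Proof.
move=> /maxsetP [/andP [_ dF] maxF] sXF dXS sFS extS.
apply/maxsetP; split; first by rewrite /dissoc_in sFS (dissoc_sub dF) ?subsetDl.
move=> B /andP [sBS dB] sFB.
have <- : X :|: B = F.
  apply: maxF; first by rewrite /dissoc_in subsetT extS.
  by rewrite -{1}(setID F X) (setIidPr sXF) setUS.
rewrite setDUl setDv set0U; apply/esym/setDidPl.
by rewrite disjoint_sym (disjointWr sBS dXS).
Qed.

(* Counting principle: if removing X sends every member of a family A of
   sets containing X to a maximal dissociation set of G[S], then A has at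
   most phi(G[S]) members (the removal is injective on supersets of X). *)
Lemma card_le_phi (S X : {set T}) (A : {set {set T}}) :
  (forall F, F \in A -> X \subset F /\ maxdiss S (F :\: X)) -> #|A| <= phi e S.
Proof.
move=> hA.
have inj : {in A &, injective (fun F => F :\: X)}.
  move=> F1 F2 /hA [s1 _] /hA [s2 _] E.
  by rewrite -(setID F1 X) -(setID F2 X) (setIidPr s1) (setIidPr s2) E.
rewrite phiE -(card_in_imset inj); apply/subset_leq_card/subsetP.
by move=> _ /imsetP [F /hA [_ mF] ->]; rewrite inE.
Qed.

Variable v : T.

Lemma card_maxdiss_avoiding :
  #|[set F | maxdiss setT F & v \notin F]| <= phi e (setT :\ v).
Proof.
apply: (card_le_phi (X := set0)) => F; rewrite inE => /andP [mF vF].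
split; first exact: sub0set.
apply: maxdiss_remove; rewrite ?sub0set ?setD0 //.
- by rewrite disjoints_subset sub0set.
- by apply/subsetP => y yF; rewrite !inE andbT; apply: contraNneq vF => <-.
- by move=> B _ dB; rewrite set0U.
Qed.

Lemma card_maxdiss_isolated :
  #|[set F | maxdiss setT F & (v \in F) && (F :&: nbh e v == set0)]|
    <= phi e (~: cnbh e v).
Proof.
apply: (card_le_phi (X := [set v])) => F; rewrite inE.
case/and3P => mF vF /eqP Fv; split; first by rewrite sub1set.
apply: maxdiss_remove; rewrite ?sub1set ?disjoints1 ?inE ?eqxx //.
  apply/subsetP => y; rewrite !inE => /andP [yv yF]; rewrite (negbTE yv) /=.
  by rewrite (no_nbh_in Fv yF).
by move=> B sB dB; apply: dissoc_add_isolated dB (nbh_outside_cnbh sB).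
Qed.

Lemma card_maxdiss_edge u : e v u ->
  #|[set F | maxdiss setT F & (v \in F) && (u \in F)]|
    <= phi e (~: (cnbh e v :|: cnbh e u)).
Proof.
move=> vu; apply: (card_le_phi (X := [set v; u])) => F; rewrite inE.
case/and3P => mF vF uF; have /maxsetP [/andP [_ dF] _] := mF.
have sXF : [set v; u] \subset F by rewrite subUset !sub1set vF uF.
split=> //; apply: maxdiss_remove => //.
- by rewrite disjoints_subset setCK; apply/subsetP => y; rewrite !inE;
    case/orP => ->; rewrite ?orbT.
- apply/subsetP => y; rewrite !inE negb_or => /andP [/andP [yv yu] yF].
  rewrite (negbTE yv) (negbTE yu) /=; apply/negP => /orP [vy|uy].
    by move/eqP: yu; apply; apply: (dissoc_nbh_uniq dF vF yF uF).
  by move/eqP: yv; apply; apply: (dissoc_nbh_uniq dF uF yF vF); rewrite // e_sym.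
- move=> B; rewrite setCU subsetI => /andP [sBv sBu] dB.
  by apply: dissoc_add_edge; rewrite ?nbh_outside_cnbh.
Qed.

(* If some neighbour w of v has N[w] inside N[v], then v is never isolated in
   a maximal dissociation set containing it: w could be added. *)
Lemma maxdiss_no_isolated (F : {set T}) w :
  w \in nbh e v -> cnbh e w \subset cnbh e v ->
  maxdiss setT F -> v \in F -> F :&: nbh e v != set0.
Proof.
rewrite inE => vw sw /maxsetP [/andP [_ dF] maxF] vF; apply/negP => /eqP Fv.
have wF : w \notin F by apply: contraTN vw => /(no_nbh_in Fv) ->.
have wnb y : y \in F -> e w y -> y = v.
  move=> yF wy; have : y \in cnbh e v by apply: (subsetP sw); rewrite !inE wy orbT.
  by rewrite !inE (no_nbh_in Fv yF) orbF => /eqP.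
have dwF : dissoc e (w |: F).
  apply: dissoc_add => // [|y yF /(wnb y yF) -> //].
  rewrite -(cards1 v); apply/subset_leq_card/subsetP => y.
  by rewrite !inE => /andP [yF /(wnb y yF) ->].
have E : w |: F = F by apply: maxF (subsetUr _ _); rewrite /dissoc_in subsetT.
by move: wF; rewrite -E setU11.
Qed.

End MaximalDissociationSets.

Theorem lemma2p2 (T : finType) (e : rel T)
  (e_sym : symmetric e) (e_irr : irreflexive e) (v : T) :
  phi e [set: T] <=
    phi e ([set: T] :\ v) + phi e (~: cnbh e v)
    + \sum_(u in nbh e v) phi e (~: (cnbh e v :|: cnbh e u))
  /\
  ((exists2 w, w \in nbh e v & cnbh e w \subset cnbh e v) ->
   phi e [set: T] <=
     phi e ([set: T] :\ v)
     + \sum_(u in nbh e v) phi e (~: (cnbh e v :|: cnbh e u))).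
Proof.
set Mout := [set F | maxdiss e setT F & v \notin F].
set Miso := [set F | maxdiss e setT F & (v \in F) && (F :&: nbh e v == set0)].
set Medge := \bigcup_(u in nbh e v)
               [set F | maxdiss e setT F & (v \in F) && (u \in F)].
have cover : [set F | maxdiss e setT F] \subset Mout :|: Miso :|: Medge.
  apply/subsetP => F; rewrite !inE => mF; rewrite mF /=.
  case vF: (v \in F) => //=; case: eqP => //= /eqP /set0Pn [u].
  by rewrite inE => /andP [uF vu]; apply/bigcupP; exists u; rewrite // inE mF vF uF.
have le_edge : #|Medge| <= \sum_(u in nbh e v) phi e (~: (cnbh e v :|: cnbh e u)).
  apply: leq_trans (card_bigcup_le _ _) _; apply: leq_sum => u; rewrite inE.
  exact: card_maxdiss_edge.
split.
  apply: leq_trans (subset_leq_card cover) _.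
  apply: leq_trans (leq_card_setU _ _) (leq_add _ le_edge).
  apply: leq_trans (leq_card_setU _ _) (leq_add _ _).
    exact: card_maxdiss_avoiding.
  exact: card_maxdiss_isolated.
case=> w vw sw.
have Miso0 : Miso = set0.
  apply/setP => F; rewrite !inE; apply/negP => /and3P [mF vF].
  exact/negP/(maxdiss_no_isolated e_sym e_irr vw sw mF vF).
rewrite Miso0 setU0 in cover; apply: leq_trans (subset_leq_card cover) _.
apply: leq_trans (leq_card_setU _ _) (leq_add _ le_edge).
exact: card_maxdiss_avoiding.
Qed.
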